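(* Let $k\ge3$ and let $u\in I_k$ be a renewed vertex. Then for every $n\ge1$ and every $v\in I^u_n$: (i) $\sigma(v)\subseteq\tilde I^u_n$; (ii) $\alpha_i(v)\subseteq I^u_{n-i}$ for each $0\le i\le n$. Moreover, $I^u_n\subseteq\mathcal U^u_n$ for every $n\ge0$, and for every $m\ge k$, every $v\in V^u_{m-k}$ and every $v'\in V_m\setminus V^u_{m-k}$, any path in $G_m$ from $v$ to $v'$ passes through $u$.
   Context: Ulam–Harris labels: $\mathcal U_n=\mathbb N^n$ ($n\ge0$, $\mathcal U_0=\{\emptyset\}$), $\mathcal U=\bigcup_{n\ge0}\mathcal U_n$; for $u=u_1\dots u_k$, $v=v_1\dots v_l$ write $uv=u_1\dots u_kv_1\dots v_l$. Fix $p>-1$, $q\in[0,1]$, and let $(\xi_u)_{u\in\mathcal U}$ be i.i.d. Poisson with mean $1+p$, and $(\delta_{u,v})_{u,v\in\mathcal U}$, $(\mu_{\{u,v\}})_{u\ne v\in\mathcal U}$ i.i.d. Bernoulli with mean $q$, all independent. The process $\mathcal G(p,q)=(G_n)_{n\ge0}$, $G_n=(V_n,E_n)$: $G_0=(\{\emptyset\},\emptyset)$, and $I_m=V_m\cap\mathcal U_m$. Given $G_{n-1}$ ($n\ge1$): (1) for $u\in I_{n-1}$ let $\mathcal K_u=\{v\in V_{n-1}:d_{G_{n-1}}(u,v)=3\}$ and $\mathcal C_u=\{j\in\mathbb N:j\le\xi_u,\ \delta_{v,uj}=0\ \forall v\in\mathcal K_u\}$; let $\tilde G_n$ have vertex set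 $V_{n-1}\cup\{ui:u\in I_{n-1},i\in\mathcal C_u\}$ and edge set $E_{n-1}\cup\{\{u,ui\}:u\in I_{n-1},i\in\mathcal C_u\}$, and $\tilde I_n$ its set of vertices in $\mathcal U_n$. (2) For $u,v\in\tilde I_n$ write $u\overset{m}{\sim}v$ iff $d_{\tilde G_n}(u,v)=4$ and $\mu_{\{u,v\}}=1$; let $\sim$ be the equivalence relation on $\tilde I_n$ generated by $\overset m\sim$, and $\pi(u)$ the lexicographically smallest element of the class of $u$. Then $V_n=V_{n-1}\cup\{\pi(u):u\in\tilde I_n\}$, $E_n=E_{n-1}\cup\{\{v,\pi(vi)\}:v\in I_{n-1},i\in\mathcal C_v\}$. Notation: for $w\in I_n$, $\alpha(w)=\bigcup_{0\le j\le n}\{x\in I_{n-j}:d_{G_n}(x,w)=j\}$ and $\alpha_i(w)=\alpha(w)\cap I_{n-i}$ for $i\le n$. For $v\in I_n$, $\sigma(v)=\{\tilde v\in\tilde I_n:\tilde v\sim v\}$. A vertex $v\in I_n$ ($n\ge3$) is renewed if exactly three vertices $w\in V_n$ satisfy $1\le d_{G_n}(v,w)\le3$. For $u\in I_k$ and $n\ge0$: $I^u_n=\{v\in I_{k+n}:u\in\alpha(v)\}$, $V^u_n=\bigcup_{j\le n}I^u_j$, $\mathcal U^u_n=\{uv:v\in\mathcal U_n\}$, and for $n\ge1$, $\tilde I^u_n=\{wi:w\in I^u_{n-1},\ wi\in\tilde I_{k+n}\}$. *)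

(* relational (Prop-valued) rendering of the
   random graph process G(p,q) for a FIXED realization of the random variables. *)
From mathcomp Require Import all_boot.
From Stdlib Require Import Relations.
Set Implicit Arguments. Unset Strict Implicit. Unset Printing Implicit Defensive.

(* Ulam-Harris labels: finite sequences of positive naturals; u i = rcons u i,
   u v = u ++ v. *)
Definition label := seq nat.

Record realization := Realization {
  xi : label -> nat;
  delta : label -> label -> bool;
  mu : label -> label -> bool }.

Record graph := Graph { gV : label -> Prop; gE : label -> label -> Prop }.

Fixpoint wlk (E : label -> label -> Prop) (j : nat) (x y : label) : Prop :=
  match j with
  | 0 => x = y
  | j'.+1 => exists z, E x z /\ wlk E j' z y
  end.

Definition dist (E : label -> label -> Prop) (x y : label) (j : nat) : Prop :=
  wlk E j x y /\ forall j', j' < j -> ~ wlk E j' x y.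

Fixpoint lexle (s t : label) : bool :=
  match s, t with
  | [::], _ => true
  | _ :: _, [::] => false
  | a :: s', b :: t' => (a < b) || ((a == b) && lexle s' t')
  end.

Section Process.
Variable r : realization.

(* parent level m = n-1 ; Gp = G_{n-1} *)
Definition Iprev (Gp : graph) (m : nat) (x : label) : Prop := gV Gp x /\ size x = m.

Definition Kset (Gp : graph) (u v : label) : Prop := gV Gp v /\ dist (gE Gp) u v 3.

Definition Cset (Gp : graph) (u : label) (j : nat) : Prop :=
  1 <= j <= xi r u /\ forall v, Kset Gp u v -> delta r v (rcons u j) = false.

Definition tildeG (Gp : graph) (m : nat) : graph :=
  Graph (fun x => gV Gp x \/ exists u j, Iprev Gp m u /\ Cset Gp u j /\ x = rcons u j)
        (fun x y => gE Gp x y \/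
           exists u j, Iprev Gp m u /\ Cset Gp u j /\
             ((x = u /\ y = rcons u j) \/ (y = u /\ x = rcons u j))).

Definition Itil_of (Gp : graph) (m : nat) (x : label) : Prop :=
  gV (tildeG Gp m) x /\ size x = m.+1.

Definition msim (Gp : graph) (m : nat) (x y : label) : Prop :=
  Itil_of Gp m x /\ Itil_of Gp m y /\ dist (gE (tildeG Gp m)) x y 4 /\ mu r x y = true.

Definition simr (Gp : graph) (m : nat) (x y : label) : Prop :=
  Itil_of Gp m x /\ Itil_of Gp m y /\ clos_refl_sym_trans label (msim Gp m) x y.

Definition isPi (Gp : graph) (m : nat) (x p : label) : Prop :=
  simr Gp m x p /\ forall y, simr Gp m x y -> lexle p y.

Definition stepG (Gp : graph) (m : nat) : graph :=
  Graph (fun x => gV Gp x \/ exists u, Itil_of Gp m u /\ isPi Gp m u x)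
        (fun x y => gE Gp x y \/
           (exists i, Iprev Gp m x /\ Cset Gp x i /\ isPi Gp m (rcons x i) y) \/
           (exists i, Iprev Gp m y /\ Cset Gp y i /\ isPi Gp m (rcons y i) x)).

Definition G0 : graph := Graph (fun x => x = [::]) (fun _ _ => False).

Fixpoint G (n : nat) : graph :=
  match n with 0 => G0 | m.+1 => stepG (G m) m end.

Definition I (n : nat) (x : label) : Prop := gV (G n) x /\ size x = n.

Definition Itil (n : nat) (x : label) : Prop := Itil_of (G n.-1) n.-1 x /\ 0 < n.

Definition sim (n : nat) (x y : label) : Prop := 0 < n /\ simr (G n.-1) n.-1 x y.

Definition sigma (n : nat) (v vt : label) : Prop := Itil n vt /\ sim n vt v.

Definition alpha (n : nat) (w x : label) : Prop :=
  exists j, j <= n /\ I (n - j) x /\ dist (gE (G n)) x w j.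

Definition alpha_i (n i : nat) (w x : label) : Prop := alpha n w x /\ I (n - i) x.

Definition near3 (n : nat) (v w : label) : Prop :=
  gV (G n) w /\ exists j, 1 <= j <= 3 /\ dist (gE (G n)) v w j.

Definition renewed (n : nat) (v : label) : Prop :=
  3 <= n /\ I n v /\
  exists w1 w2 w3, [/\ w1 <> w2, w1 <> w3 & w2 <> w3] /\
    near3 n v w1 /\ near3 n v w2 /\ near3 n v w3 /\
    forall w, near3 n v w -> w = w1 \/ w = w2 \/ w = w3.

Definition Iu (k : nat) (u : label) (n : nat) (v : label) : Prop :=
  I (k + n) v /\ alpha (k + n) v u.

Definition Vu (k : nat) (u : label) (n : nat) (v : label) : Prop :=
  exists j, j <= n /\ Iu k u j v.

Definition Itu (k : nat) (u : label) (n : nat) (x : label) : Prop :=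
  exists w i, Iu k u n.-1 w /\ x = rcons w i /\ Itil (k + n) x.

End Process.

Definition Uu (u : label) (n : nat) (x : label) : Prop :=
  exists w : label, size w = n /\ all (fun i => 0 < i) w /\ x = u ++ w.

Fixpoint walkseq (E : label -> label -> Prop) (x : label) (p : seq label) : Prop :=
  match p with
  | [::] => True
  | y :: p' => E x y /\ walkseq E y p'
  end.

From Stdlib Require Import Relations.
From mathcomp Require Import all_boot.
From mathcomp Require Import zify.
Set Implicit Arguments. Unset Strict Implicit. Unset Printing Implicit Defensive.

(* The descendants of a renewed vertex u form a branch attached to the rest
   of G_m through u alone: no edge of G_m leaves V^u_(m-k) at a vertex other
   than u.  Edges join consecutive generations, and a vertex pi(c) of
   generation n+1 is joined to the parent of every child c merged into it.
   Merged children are linked by a chain of tilde-distance-4 steps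
   c - z - x - z' - c', whose middle part joins the parents z, z' by a walk of
   length 2 in G_n.  By induction on m, z' lies in the branch whenever z does,
   unless that walk passes through u; there renewal helps: the only vertices
   within distance 3 of u are its three ancestors, so no other vertex of
   generation k is at distance 2 from u.  Ancestors of branch vertices, the
   labels u w and the separation property all follow from this closure. *)

Definition size_step (E : label -> label -> Prop) :=
  forall a b, E a b -> size b = (size a).+1 \/ size a = (size b).+1.

Section Walks.
Variable E : label -> label -> Prop.

Lemma wlk_size n x y : size_step E -> wlk E n x y ->
  size y <= size x + n /\ size x <= size y + n.
Proof.
move=> Hstep; elim: n x => [|n IH] x /=; first by move=> ->; lia.
move=> [z [Exz Wzy]]; have := IH _ Wzy; have := Hstep _ _ Exz; lia.
Qed.

Lemma wlk_snoc n x y z : wlk E n x y -> E y z -> wlk E n.+1 x z.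
Proof.
elim: n x => [|n IH] x /=; first by move=> -> Eyz; exists z.
by move=> [w [Exw Wwy]] Eyz; exists w; split; last exact: IH.
Qed.

Lemma wlk_last n x y : wlk E n.+1 x y -> exists2 z, wlk E n x z & E z y.
Proof.
elim: n x => [|n IH] x /=; first by move=> [z [Exz <-]]; exists x.
move=> [w [Exw Wwy]]; have [z Wwz Ezy] := IH _ Wwy.
by exists z => //; exists w.
Qed.

Lemma sub_wlk (E' : label -> label -> Prop) n x y :
  (forall a b, E a b -> E' a b) -> wlk E n x y -> wlk E' n x y.
Proof.
by move=> sEE'; elim: n x => [|n IH] x //= [z [Exz Wzy]]; exists z; split; auto.
Qed.

Lemma wlk_rev n x y : (forall a b, E a b -> E b a) -> wlk E n x y -> wlk E n y x.
Proof.
move=> Esym; elim: n x => [|n IH] x /=; first by move=> ->.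
by move=> [z [Exz /IH Wyz]]; apply: wlk_snoc Wyz (Esym _ _ Exz).
Qed.

End Walks.

Lemma sizes_pigeonhole (a b c d w1 w2 w3 : label) :
  size d < size c -> size c < size b -> size b < size a ->
  (a = w1 \/ a = w2 \/ a = w3) -> (b = w1 \/ b = w2 \/ b = w3) ->
  (c = w1 \/ c = w2 \/ c = w3) -> (d = w1 \/ d = w2 \/ d = w3) -> False.
Proof.
move=> Hdc Hcb Hba.
by case=> [|[|]] ?; subst a; case=> [|[|]] ?; subst b; case=> [|[|]] ?; subst c;
  case=> [|[|]] ?; subst d; lia.
Qed.

Section Process.
Variable r : realization.

Lemma isPi_Itil_of Gp m a b : isPi r Gp m a b -> Itil_of r Gp m a /\ Itil_of r Gp m b.
Proof. by move=> [[Ha [Hb _]] _]. Qed.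

Lemma Itil_of_rcons Gp m x : (forall y, gV Gp y -> size y <= m) ->
  Itil_of r Gp m x -> exists w j, [/\ Iprev Gp m w, Cset r Gp w j & x = rcons w j].
Proof.
move=> szV [/= [/szV|[w [j [Iw [Cw ->]]]]] Sx]; first lia.
by exists w, j.
Qed.

Lemma G_size_edges m :
  (forall x, gV (G r m) x -> size x <= m) /\
  (forall x y, gE (G r m) x y -> [/\ gV (G r m) x, gV (G r m) y &
      size y = (size x).+1 \/ size x = (size y).+1]).
Proof.
elim: m => [|m [IHV IHE]] /=; first by split => [x ->|x y []].
split=> [x [/IHV|[a [_ /isPi_Itil_of [_ [_ ->]]]]]|]; first lia; first by [].
move=> x y [/IHE [Vx Vy Hs]|[[i [[Vx Sx] [Ci P]]]|[i [[Vy Sy] [Ci P]]]]].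
- by split; [left|left|].
- have [Ia [Vy' Sy]] := isPi_Itil_of P.
  by split; [left|right; exists (rcons x i)|left; rewrite Sy Sx].
- have [Ia [Vx' Sx]] := isPi_Itil_of P.
  by split; [right; exists (rcons y i)|left|right; rewrite Sy Sx].
Qed.

Lemma GV_size m x : gV (G r m) x -> size x <= m.
Proof. exact: (G_size_edges m).1. Qed.

Lemma GE_vertices m x y : gE (G r m) x y -> gV (G r m) x /\ gV (G r m) y.
Proof. by case/(G_size_edges m).2. Qed.

Lemma GE_size_step m : size_step (gE (G r m)).
Proof. by move=> x y; case/(G_size_edges m).2. Qed.

Lemma GE_mono m m' x y : m <= m' -> gE (G r m) x y -> gE (G r m') x y.
Proof. by move=> /subnK <-; elim: (m' - m) => [|d IH] //= /IH; left. Qed.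

Lemma GE_sym m x y : gE (G r m) x y -> gE (G r m) y x.
Proof.
elim: m x y => [|m IH] x y //= [/IH|[H|H]]; by [left|right; right|right; left].
Qed.

Lemma GE_down m s x y : gE (G r m) x y -> size x <= s -> size y <= s -> s <= m ->
  gE (G r s) x y.
Proof.
elim: m => [|m IH] H Hx Hy; first by rewrite leqn0 => /eqP ->.
rewrite leq_eqVlt ltnS => /orP[/eqP -> //|Hs].
move: H => /= [/IH|[[i [[_ Sx] [_ /isPi_Itil_of [_ [_ Sy]]]]]|
              [i [[_ Sy] [_ /isPi_Itil_of [_ [_ Sx]]]]]]]; first exact; lia.
Qed.

Lemma GV_at_size m x : gV (G r m) x -> gV (G r (size x)) x.
Proof.
elim: m => [|m IH] /=; first by move=> ->.
move=> [/IH //|[a [Ia P]]]; have [_ [_ ->]] := isPi_Itil_of P.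
by right; exists a.
Qed.

Lemma GV_parent m x : gV (G r m) x -> 0 < size x ->
  exists2 y, gE (G r m) x y & size x = (size y).+1.
Proof.
elim: m x => [|m IH] x /=; first by move=> ->.
move=> [/IH Vx /Vx [y Exy Sy]|[a Ha]]; first by exists y => //; left.
have [[Va Sa] P] := Ha; have [_ [_ Sx]] := isPi_Itil_of P.
have [w [j [Iw Cw Ea]]] := Itil_of_rcons (@GV_size m) (conj Va Sa).
exists w; first by right; right; exists j; rewrite -Ea.
by case: Iw => _ Sw; rewrite Sx Sw.
Qed.

Lemma wlk_down m s n x y : wlk (gE (G r m)) n x y -> size y = size x + n ->
  size y <= s -> s <= m -> wlk (gE (G r s)) n x y.
Proof.
elim: n x => [|n IH] x //= [z [Exz Wzy]] Sy Hy Hs.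
have := wlk_size (@GE_size_step m) Wzy; have := GE_size_step Exz => Hz Hw.
exists z; split; last by apply: IH => //; lia.
by apply: GE_down Exz _ _ Hs; lia.
Qed.

Lemma tildeE_sym m x y : gE (tildeG r (G r m) m) x y -> gE (tildeG r (G r m) m) y x.
Proof.
move=> /= [/GE_sym|[a [j [Ia [Ca [[-> ->]|[-> ->]]]]]]]; first by left.
- by right; exists a, j; do 2!split => //; right.
- by right; exists a, j; do 2!split => //; left.
Qed.

Lemma tildeE_new_parent m x y : gE (tildeG r (G r m) m) x y -> size x = m.+1 ->
  exists j, Iprev (G r m) m y /\ x = rcons y j.
Proof.
move=> /= [/GE_vertices [/GV_size Vx _]|[a [j [[Va Sa] [Ca [[-> ->]|[-> ->]]]]]]] Sx.
- lia.
- by move: Sx; rewrite Sa; lia.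
- by exists j.
Qed.

Lemma tildeE_two_steps m z x w :
  gE (tildeG r (G r m) m) z x -> gE (tildeG r (G r m) m) x w ->
  size z = m -> size w = m -> (gE (G r m) z x /\ gE (G r m) x w) \/ w = z.
Proof.
move=> /= E1 E2 Sz Sw; case: E1 => [E1|[a [j [[Va Sa] [Ca [[Ez Ex]|[Ex Ez]]]]]]].
- have [_ /GV_size Vx] := GE_vertices E1.
  case: E2 => [E2|[b [i [[Vb Sb] [Cb [[Ex Ew]|[Ew Ex]]]]]]]; first by left.
  + by move: Sw; rewrite Ew size_rcons Sb; lia.
  + by move: Vx; rewrite Ex size_rcons; lia.
- have Sx : size x = m.+1 by rewrite Ex size_rcons Sa.
  have [i [_ Ex']] := tildeE_new_parent E2 Sx.
  by right; rewrite Ez; move: Ex'; rewrite Ex => /rcons_inj[-> _].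
- by move: Sz; rewrite Ez size_rcons; lia.
Qed.

End Process.

Section Descendants.
Variables (r : realization) (k : nat) (u : label).
Hypothesis Hu : I r k u.

Lemma size_u : size u = k.
Proof. by case: Hu. Qed.

Lemma Iu_wlk n v : Iu r k u n v -> I r (k + n) v /\ wlk (gE (G r (k + n))) n u v.
Proof.
move=> [Iv [j [Hj [[_ Sv] [W _]]]]]; have := size_u; rewrite Sv => Hjn.
have ? : j = n by lia.
by subst j.
Qed.

Lemma wlk_Iu n v : I r (k + n) v -> wlk (gE (G r (k + n))) n u v -> Iu r k u n v.
Proof.
move=> Iv W; split => //; exists n; split; first lia.
split; first by rewrite addnK.
split => // j' Hj' /(wlk_size (@GE_size_step r _)).
by case: Iv => _; rewrite size_u; lia.
Qed.

Lemma Iu0_eq v : Iu r k u 0 v -> v = u.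
Proof. by move/Iu_wlk => [_ /= ->]. Qed.

Lemma Iu0_root : Iu r k u 0 u.
Proof. by apply: wlk_Iu; rewrite ?addn0. Qed.

Lemma Iu_size n v : Iu r k u n v -> size v = k + n.
Proof. by move=> [[_ ->] _]. Qed.

Lemma Vu_Iu m v : Vu r k u m v -> size v <= k + m /\ Iu r k u (size v - k) v.
Proof. by move=> [j [Hj Iv]]; rewrite (Iu_size Iv) addKn; split => //; lia. Qed.

Lemma Iu_child m j y y' : Iu r k u j y -> gE (G r m) y y' -> size y' = k + j.+1 ->
  Iu r k u j.+1 y'.
Proof.
move=> /Iu_wlk [[_ Sy] W] E Sy'.
have [_ Vy'] := GE_vertices E; have Hm := GV_size Vy'.
apply: wlk_Iu; first by split => //; rewrite -Sy'; exact: GV_at_size Vy'.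
apply: (wlk_snoc (y := y)); first by apply: sub_wlk W => a b; apply: GE_mono; lia.
by apply: GE_down E _ _ _; lia.
Qed.

Lemma Iu_parent j y : Iu r k u j.+1 y ->
  exists z i, Iu r k u j z /\ isPi r (G r (k + j)) (k + j) (rcons z i) y.
Proof.
move=> /Iu_wlk [[_ Sy] /wlk_last [z W E]].
have := wlk_size (@GE_size_step r _) W; have := GE_size_step E; rewrite size_u.
move=> Hz Hw; have Sz : size z = k + j by lia.
move: E; rewrite addnS /= => [[E|[[i [Iz [_ P]]]|[i [[_ Sy'] _]]]]].
- by have [_ /GV_size] := GE_vertices E; lia.
- exists z, i; split => //; apply: wlk_Iu; first by case: Iz.
  by apply: wlk_down W _ _ _; rewrite ?size_u; lia.
- lia.
Qed.

Definition Vu_closed m := forall y y', Vu r k u (m - k) y -> y <> u ->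
  gE (G r m) y y' -> Vu r k u (m - k) y'.

Hypothesis Hren : renewed r k u.

Lemma near3_wlk j y : wlk (gE (G r k)) j u y -> 1 <= j <= 3 -> k = size y + j ->
  gV (G r k) y -> near3 r k u y.
Proof.
move=> W Hj Sy Vy; split => //; exists j; split => //; split => // j' Hj'.
by move/(wlk_size (@GE_size_step r _)); rewrite size_u; lia.
Qed.

(* Otherwise w, x and the two ancestors of x would be four vertices within
   distance 3 of u. *)
Lemma renewed_two_step_eq x w :
  gE (G r k) u x -> gE (G r k) x w -> size w = k -> w = u.
Proof.
move=> E1 E2 Sw; case: (eqVneq w u) => // Hwu; exfalso.
have [Hk _] := Hren.
have [_ Vx] := GE_vertices E1; have [_ Vw] := GE_vertices E2.
have Sx : size x = k - 1.
  by have := GV_size Vx; have := GE_size_step E1; rewrite size_u; lia.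
have [g Eg Sg] := GV_parent Vx (ltac:(lia)); have [_ Vg] := GE_vertices Eg.
have [h Eh Sh] := GV_parent Vg (ltac:(lia)); have [_ Vh] := GE_vertices Eh.
have Nx : near3 r k u x by apply: (near3_wlk (j := 1)) => //; [exists x | lia].
have Ng : near3 r k u g.
  by apply: (near3_wlk (j := 2)) => //; [exists x; split => //; exists g | lia].
have Nh : near3 r k u h.
  apply: (near3_wlk (j := 3)) => //; last lia.
  by exists x; split => //; exists g; split => //; exists h.
have Nw : near3 r k u w.
  split => //; exists 2; split => //; split; first by exists x; split => //; exists w.
  case=> [|[|]] // _ /=; first by move=> Euw; rewrite Euw eqxx in Hwu.
  move=> [z [E Ezw]]; subst z; have := GE_size_step E; rewrite size_u Sw; lia.
have [_ [_ [w1 [w2 [w3 [_ [_ [_ [_ Hall]]]]]]]]] := Hren.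
by apply: (sizes_pigeonhole _ _ _ (Hall _ Nw) (Hall _ Nx) (Hall _ Ng) (Hall _ Nh)); lia.
Qed.

Lemma two_step_Iu j z x w : Vu_closed (k + j) -> Iu r k u j z ->
  gE (G r (k + j)) z x -> gE (G r (k + j)) x w -> size w = k + j -> Iu r k u j w.
Proof.
move=> closed Iz Ezx Exw Sw; have Sz := Iu_size Iz.
case: (eqVneq z u) => [Ezu|/eqP Hzu].
  subst z; have ? : j = 0 by move: Sz; rewrite size_u; lia.
  subst j; rewrite addn0 in Ezx Exw Sw.
  by rewrite (renewed_two_step_eq Ezx Exw Sw); exact: Iu0_root.
have Vz : Vu r k u (k + j - k) z by rewrite addKn; exists j.
have Vx := closed _ _ Vz Hzu Ezx.
case: (eqVneq x u) => [Exu|/eqP Hxu].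
  subst x; have ? : j = 1.
    by have := GE_size_step Exw; rewrite size_u Sw; have := GE_size_step Ezx; lia.
  by subst j; apply: (Iu_child Iu0_root Exw).
by have [_] := Vu_Iu (closed _ _ Vx Hxu Exw); rewrite Sw addKn.
Qed.

Definition parent_Iu j (a : label) := forall w i, a = rcons w i -> Iu r k u j w.

Lemma dist4_parent_Iu j a b : Vu_closed (k + j) ->
  Itil_of r (G r (k + j)) (k + j) a -> Itil_of r (G r (k + j)) (k + j) b ->
  wlk (gE (tildeG r (G r (k + j)) (k + j))) 4 a b -> parent_Iu j a -> parent_Iu j b.
Proof.
move=> closed Ia [Vb Sb] W Pa w' i' Eb.
have [z [i [[_ Sz] _ Ea]]] := Itil_of_rcons (@GV_size r _) Ia.
have Sw' : size w' = k + j by move: Sb; rewrite Eb size_rcons => [[]].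
move: W => /= [x1 [E1 [x2 [E2 [x3 [E3 [x4 [E4 E5]]]]]]]].
have [j1 [_]] := tildeE_new_parent E1 Ia.2; rewrite Ea => /rcons_inj[? _]; subst x1.
have Sx4 : size x4 = (k + j).+1 by rewrite E5.
have [j3 [_]] := tildeE_new_parent (tildeE_sym E4) Sx4.
rewrite E5 Eb => /rcons_inj[? _]; subst x3.
have Iz := Pa _ _ Ea.
by case: (tildeE_two_steps E2 E3 Sz Sw') => [[F1 F2]|->] //; apply: two_step_Iu F1 F2 _.
Qed.

Lemma rst_parent_Iu j a b : Vu_closed (k + j) ->
  clos_refl_sym_trans label (msim r (G r (k + j)) (k + j)) a b ->
  parent_Iu j a <-> parent_Iu j b.
Proof.
move=> closed; elim=> {a b} [a b [Ia [Ib [[W _] _]]]|//|a b _|a b c _ ? _]; try tauto.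
split; first exact: dist4_parent_Iu.
by apply: dist4_parent_Iu => //; apply: wlk_rev W; exact: tildeE_sym.
Qed.

Lemma Iu_class_parent j y x w i : Vu_closed (k + j) -> Iu r k u j.+1 y ->
  clos_refl_sym_trans label (msim r (G r (k + j)) (k + j)) x y ->
  x = rcons w i -> Iu r k u j w.
Proof.
move=> closed Iy Cxy Ex.
have [z [i0 [Iz [[_ [_ Czy]] _]]]] := Iu_parent Iy.
have Czx := rst_trans _ _ _ _ _ Czy (rst_sym _ _ _ _ Cxy).
have Pz : parent_Iu j (rcons z i0) by move=> w' i1 /rcons_inj[<- _].
exact: (rst_parent_Iu closed Czx).1 Pz w i Ex.
Qed.

Lemma Vu_closed_all m : Vu_closed m.
Proof.
elim/ltn_ind: m => m IH y y' [j [Hj Iy]] Hyu E.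
case: j Hj Iy => [|j] Hj Iy; first by have := Iu0_eq Iy.
have Sy := Iu_size Iy; have [Vy Vy'] := GE_vertices E.
have Hm := GV_size Vy; have Hm' := GV_size Vy'.
case: (GE_size_step E) => Sy'.
  by exists j.+2; split; [lia | apply: Iu_child Iy E _; lia].
exists j; split; first lia.
have E' : gE (G r (k + j).+1) y y' by apply: GE_down E _ _ _; lia.
move: E' => /= [/GE_vertices [/GV_size ? _]|[[i [[_ S] _]]|[i [_ [_ [[_ [_ C]] _]]]]]].
- lia.
- lia.
- by apply: Iu_class_parent C _ => //; apply: IH; lia.
Qed.

Lemma Iu_ancestor n i x v : Iu r k u n v -> i <= n -> wlk (gE (G r (k + n))) i x v ->
  size v = size x + i -> Iu r k u (n - i) x.
Proof.
move=> Iv; elim: i x => [|i IH] x Hi /=; first by move=> -> _; rewrite subn0.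
move=> [z [E W]] Sv.
have := wlk_size (@GE_size_step r _) W; have := GE_size_step E => Hxz Hzv.
have Iz := IH z (ltnW Hi) W (ltac:(lia)); have Sz := Iu_size Iz.
have Vz : Vu r k u (k + n - k) z by rewrite addKn; exists (n - i); split => //; lia.
have Hzu : z <> u by move=> Ezu; move: Sz; rewrite Ezu size_u; lia.
have [_] := Vu_Iu (Vu_closed_all Vz Hzu (GE_sym E)).
by have -> : size x - k = n - i.+1 by have := Iu_size Iv; lia.
Qed.

Lemma alpha_i_Iu n i v x : Iu r k u n v -> i <= n -> alpha_i r (k + n) i v x ->
  Iu r k u (n - i) x.
Proof.
move=> Iv Hi [[j [Hj [[_ Sx] [W _]]]] [_ Sx']].
have ? : j = i by lia.
subst j; apply: (Iu_ancestor Iv Hi W).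
by rewrite Sx (Iu_size Iv); lia.
Qed.

Lemma sigma_Itu n v x : Iu r k u n.+1 v -> sigma r (k + n.+1) v x -> Itu r k u n.+1 x.
Proof.
move=> Iv [[Ix _] [_ [_ [_ Cxv]]]]; rewrite addnS /= in Ix Cxv.
have [w [j [_ _ Ex]]] := Itil_of_rcons (@GV_size r _) Ix.
exists w, j; split; last by rewrite addnS.
exact: Iu_class_parent (@Vu_closed_all (k + n)) Iv Cxv Ex.
Qed.

Lemma Iu_Uu n v : Iu r k u n v -> Uu u n v.
Proof.
elim: n v => [|n IH] v Iv; first by rewrite (Iu0_eq Iv); exists [::]; rewrite cats0.
have [z [i0 [_ [[Izi [Iv' _]] _]]]] := Iu_parent Iv.
have [w [j [_ [/andP[Hj _] _] Ev]]] := Itil_of_rcons (@GV_size r _) Iv'.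
have Iw := Iu_class_parent (@Vu_closed_all (k + n)) Iv (rst_refl _ _ v) Ev.
have [s [Ss [As Ew]]] := IH _ Iw.
exists (rcons s j); rewrite size_rcons Ss all_rcons As Ev Ew rcons_cat.
by rewrite andbT.
Qed.

Lemma Vu_separated m v v' p : Vu r k u (m - k) v -> ~ Vu r k u (m - k) v' ->
  walkseq (gE (G r m)) v p -> last v p = v' -> u \in v :: p.
Proof.
elim: p v => [|y p IH] v Vv Nv' /=; first by move=> _ Ev; rewrite Ev in Vv.
move=> [E W] L; case: (eqVneq v u) => [->|/eqP Hvu]; first by rewrite inE eqxx.
by rewrite inE (IH y (Vu_closed_all Vv Hvu E) Nv' W L) orbT.
Qed.

End Descendants.

Theorem lemma4p1 (r : realization)
  (mu_sym : forall a b, mu r a b = mu r b a)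
  (k : nat) (u : label) :
  3 <= k -> I r k u -> renewed r k u ->
  (forall n, 1 <= n -> forall v, Iu r k u n v ->
     (forall x, sigma r (k + n) v x -> Itu r k u n x) /\
     (forall i, i <= n -> forall x, alpha_i r (k + n) i v x -> Iu r k u (n - i) x))
  /\ (forall n v, Iu r k u n v -> Uu u n v)
  /\ (forall m, k <= m -> forall v v',
        Vu r k u (m - k) v -> gV (G r m) v' -> ~ Vu r k u (m - k) v' ->
        forall p : seq label, uniq (v :: p) -> walkseq (gE (G r m)) v p ->
        last v p = v' -> u \in v :: p).
Proof.
move=> _ Hu Hren; split; last split.
- case=> [|n] // _ v Iv; split => [x|i Hi x].
  + exact: (sigma_Itu Hu Hren Iv).
  + exact: (alpha_i_Iu Hu Hren Iv Hi).
- exact: Iu_Uu Hu Hren.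
- by move=> m _ v v' Vv _ Nv' p _; exact: (Vu_separated Hu Hren Vv Nv').
Qed.
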